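(* For every integer $p\ge 1$, the edge set of $K_{4p,4p,4p}\times K_2$ can be partitioned into $2p+1$ planar subgraphs; in particular $\theta(K_{4p,4p,4p}\times K_2)\le 2p+1$.
   Context: The thickness $\theta(G)$ of a graph $G$ is the minimum number of planar subgraphs whose union is $G$. The Kronecker product $G\times H$ of graphs $G$ and $H$ is the graph with vertex set $V(G)\times V(H)$ in which $(g,h)$ and $(g',h')$ are adjacent if and only if $gg'\in E(G)$ and $hh'\in E(H)$. $K_{n,n,n}$ denotes the complete tripartite graph with three parts of size $n$. *)

From Stdlib Require Import Reals.
Open Scope R_scope.

Definition idx (n : nat) : Type := { i : nat | (i < n)%nat }.

(* A (simple, undirected) graph is given by a vertex type and an adjacency relation. *)

Definition Knnn_V (n : nat) : Type := (idx 3 * idx n)%type.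
Definition Knnn_adj (n : nat) (x y : Knnn_V n) : Prop :=
  proj1_sig (fst x) <> proj1_sig (fst y).

Definition K2_adj (b c : bool) : Prop := b <> c.

Definition kron {VG VH : Type} (adjG : VG -> VG -> Prop) (adjH : VH -> VH -> Prop)
  (x y : VG * VH) : Prop :=
  adjG (fst x) (fst y) /\ adjH (snd x) (snd y).

Definition planar {V : Type} (adj : V -> V -> Prop) : Prop :=
  exists (pos : V -> R * R) (arc : V -> V -> R -> R * R),
    (forall u v, pos u = pos v -> u = v) /\
    (forall u v, adj u v ->
       continuity (fun t => fst (arc u v t)) /\
       continuity (fun t => snd (arc u v t)) /\
       arc u v 0 = pos u /\ arc u v 1 = pos v /\
       (forall s t, 0 <= s <= 1 -> 0 <= t <= 1 -> arc u v s = arc u v t -> s = t) /\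
       (forall t w, 0 < t < 1 -> arc u v t <> pos w) /\
       (forall t, arc v u t = arc u v (1 - t))) /\
    (forall u v x y, adj u v -> adj x y ->
       ~ ((u = x /\ v = y) \/ (u = y /\ v = x)) ->
       forall s t, 0 < s < 1 -> 0 < t < 1 -> arc u v s <> arc x y t).

Definition planar_edge_partition {V : Type} (adj : V -> V -> Prop) (k : nat) : Prop :=
  exists c : V -> V -> nat,
    (forall u v, adj u v -> c u v = c v u /\ (c u v < k)%nat) /\
    (forall i, (i < k)%nat -> planar (fun u v => adj u v /\ c u v = i)).

Definition thickness_le {V : Type} (adj : V -> V -> Prop) (k : nat) : Prop :=
  exists sub : nat -> V -> V -> Prop,
    (forall i, (i < k)%nat -> forall u v, sub i u v -> adj u v) /\
    (forall i, (i < k)%nat -> planar (sub i)) /\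
    (forall u v, adj u v -> exists i, (i < k)%nat /\ sub i u v).

From Stdlib Require Import Reals Arith Lia Lra.

(* The Kronecker product is a blow-up of a hexagon: grouping the vertices by
   (part, side) gives six groups of 4p vertices, and two vertices are adjacent
   iff their groups are consecutive on the hexagon.  Orient each edge along the
   hexagon.  Edges joining vertices of equal index form 4p disjoint hexagons:
   this is the last class.  The remaining edges between a group and the next
   one form a copy of K_{4p,4p} minus a perfect matching, and an explicit
   arithmetic labelling (kclass) splits it into p pieces, each mapped
   injectively into a fixed bipartite quadrangulation (the template).  The
   classes m*p + k (m < 2, k < p) gather the pieces of label k of the three
   copies whose tail groups have parity m.

   Planarity is shown by two-page book embeddings: vertices on a spine
   (ordered lexicographically on nat * nat, then embedded in R), edges drawn
   as parabolic arches above or below it; arches on the same page meet only if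
   their chords cross. *)

Definition strictly_inside {T : Type} (lt : T -> T -> Prop) (y a b : T) : Prop :=
  (lt a y /\ lt y b) \/ (lt b y /\ lt y a).

Definition strictly_outside {T : Type} (lt : T -> T -> Prop) (y a b : T) : Prop :=
  (lt y a /\ lt y b) \/ (lt a y /\ lt b y).

Definition crossing {T : Type} (lt : T -> T -> Prop) (a b c d : T) : Prop :=
  (strictly_inside lt c a b /\ strictly_outside lt d a b) \/
  (strictly_inside lt d a b /\ strictly_outside lt c a b).

Lemma crossing_swap_l {T : Type} (lt : T -> T -> Prop) a b c d :
  crossing lt a b c d -> crossing lt b a c d.
Proof. unfold crossing, strictly_inside, strictly_outside; tauto. Qed.

Lemma crossing_swap_r {T : Type} (lt : T -> T -> Prop) a b c d :
  crossing lt a b c d -> crossing lt a b d c.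
Proof. unfold crossing, strictly_inside, strictly_outside; tauto. Qed.

Lemma crossing_reflect {T U : Type} (ltT : T -> T -> Prop) (ltU : U -> U -> Prop)
    (f : T -> U) a b c d :
  (forall x y, ltU (f x) (f y) -> ltT x y) ->
  crossing ltU (f a) (f b) (f c) (f d) -> crossing ltT a b c d.
Proof. intros Hf. unfold crossing, strictly_inside, strictly_outside. intuition. Qed.

Definition noncrossing {V T : Type} (lt : T -> T -> Prop) (adj : V -> V -> Prop)
    (x : V -> T) (page : V -> V -> bool) : Prop :=
  forall u v w z, adj u v -> adj w z -> page u v = page w z ->
    ~ crossing lt (x u) (x v) (x w) (x z).

Lemma noncrossing_reflect {V T U : Type} (ltT : T -> T -> Prop) (ltU : U -> U -> Prop)
    (f : T -> U) (adj : V -> V -> Prop) x page :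
  (forall a b, ltU (f a) (f b) -> ltT a b) ->
  noncrossing ltT adj x page -> noncrossing ltU adj (fun v => f (x v)) page.
Proof.
  intros Hf Hnc u v w z Huv Hwz Hp Hcr.
  exact (Hnc u v w z Huv Hwz Hp (crossing_reflect ltT ltU f _ _ _ _ Hf Hcr)).
Qed.

Lemma noncrossing_pullback {V W T : Type} (lt : T -> T -> Prop)
    (adj : V -> V -> Prop) (adjW : W -> W -> Prop) (f : V -> W) x page :
  (forall u v, adj u v -> adjW (f u) (f v)) ->
  noncrossing lt adjW x page ->
  noncrossing lt adj (fun v => x (f v)) (fun u v => page (f u) (f v)).
Proof. intros Hf Hnc u v w z Huv Hwz. apply Hnc; auto. Qed.

(* Symmetrizing an oriented noncrossing drawing: pages may be read off from
   either orientation of an edge, since crossing ignores chord orientation. *)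
Lemma noncrossing_symmetrize {V T : Type} (lt : T -> T -> Prop)
    (adj : V -> V -> Prop) x (page page' : V -> V -> bool) :
  (forall u v, adj u v -> page' u v = page u v /\ page' v u = page u v) ->
  noncrossing lt adj x page ->
  noncrossing lt (fun u v => adj u v \/ adj v u) x page'.
Proof.
  intros Hp Hnc u v w z Huv Hwz Hpg Hcr.
  destruct Huv as [Huv|Huv]; destruct Hwz as [Hwz|Hwz];
  pose proof (Hp _ _ Huv) as [P1 P2]; pose proof (Hp _ _ Hwz) as [P3 P4].
  - apply (Hnc u v w z); congruence.
  - apply (Hnc u v z w); [auto|auto|congruence|]. now apply crossing_swap_r.
  - apply (Hnc v u w z); [auto|auto|congruence|]. now apply crossing_swap_l.
  - apply (Hnc v u z w); [auto|auto|congruence|].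
    now apply crossing_swap_l, crossing_swap_r.
Qed.

Lemma symmetrized_page_sym {V : Type} (adj : V -> V -> Prop) (page page' : V -> V -> bool) :
  (forall u v, adj u v -> page' u v = page u v /\ page' v u = page u v) ->
  forall u v, adj u v \/ adj v u -> page' u v = page' v u.
Proof. intros Hp u v [H|H]; destruct (Hp _ _ H); congruence. Qed.

Section BookDrawings.
Local Open Scope R_scope.

(* Two parabolic arches over the chords [a,b] and [c,d] of the real line that
   meet at abscissa X with the same height belong to the same chord, unless the
   chords cross. *)
Lemma arches_meet_sorted (a b c d X : R) :
  a < X < b -> c < X < d -> (X - a) * (b - X) = (X - c) * (d - X) ->
  ~ crossing Rlt a b c d -> a = c /\ b = d.
Proof.
  unfold crossing, strictly_inside, strictly_outside. intros HX1 HX2 Heq Hnc.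
  destruct (Rtotal_order a c) as [Hac|[<-|Hac]].
  - destruct (Rlt_le_dec b d) as [Hbd|Hdb]; [exfalso; apply Hnc; left; lra|].
    assert ((X - c) * (d - X) < (X - a) * (b - X)).
    { apply Rle_lt_trans with ((X - c) * (b - X)).
      - apply Rmult_le_compat_l; lra.
      - apply Rmult_lt_compat_r; lra. }
    lra.
  - split; [reflexivity|].
    destruct (Rtotal_order b d) as [H|[H|H]]; [exfalso|exact H|exfalso].
    + assert ((X - a) * (b - X) < (X - a) * (d - X)) by (apply Rmult_lt_compat_l; lra). lra.
    + assert ((X - a) * (d - X) < (X - a) * (b - X)) by (apply Rmult_lt_compat_l; lra). lra.
  - destruct (Rlt_le_dec d b) as [Hdb|Hbd]; [exfalso; apply Hnc; right; lra|].
    assert ((X - a) * (b - X) < (X - c) * (d - X)).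
    { apply Rle_lt_trans with ((X - a) * (d - X)).
      - apply Rmult_le_compat_l; lra.
      - apply Rmult_lt_compat_r; lra. }
    lra.
Qed.

Lemma arches_meet (a b c d X : R) :
  strictly_inside Rlt X a b -> strictly_inside Rlt X c d -> (X - a) * (b - X) = (X - c) * (d - X) ->
  ~ crossing Rlt a b c d -> (a = c /\ b = d) \/ (a = d /\ b = c).
Proof.
  intros [Hab|Hab] [Hcd|Hcd] Heq Hnc.
  - left. now apply (arches_meet_sorted a b c d X).
  - right. destruct (arches_meet_sorted a b d c X); [lra|lra|lra| |lra].
    intro H; now apply Hnc, crossing_swap_r.
  - right. destruct (arches_meet_sorted b a c d X); [lra|lra|lra| |lra].
    intro H; now apply Hnc, crossing_swap_l.
  - left. destruct (arches_meet_sorted b a d c X); [lra|lra|lra| |lra].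
    intro H; now apply Hnc, crossing_swap_l, crossing_swap_r.
Qed.

Lemma arch_height_pos (a b X : R) : strictly_inside Rlt X a b -> 0 < (X - a) * (b - X).
Proof. intros [H|H]; nra. Qed.

(* Its height at
   abscissa X is (X - x u) * (x v - X), which is symmetric in u and v. *)
Definition page_sign (b : bool) : R := if b then 1 else -1.

Definition arch (xu xv : R) (pg : bool) (t : R) : R * R :=
  let X := xu + t * (xv - xu) in (X, page_sign pg * ((X - xu) * (xv - X))).

Lemma book_planar {V : Type} (adj : V -> V -> Prop) (x : V -> R) (page : V -> V -> bool) :
  (forall u v, x u = x v -> u = v) ->
  (forall u v, adj u v -> u <> v) ->
  (forall u v, adj u v -> page u v = page v u) ->
  noncrossing Rlt adj x page ->
  planar adj.
Proof.
  intros Hinj Hirr Hsym Hnc.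
  assert (Hne : forall u v, adj u v -> x u <> x v) by (intros u v A E; exact (Hirr u v A (Hinj u v E))).
  assert (Hin : forall u v t, adj u v -> 0 < t < 1 ->
            strictly_inside Rlt (x u + t * (x v - x u)) (x u) (x v)).
  { intros u v t A Ht. unfold strictly_inside. pose proof (Hne u v A).
    destruct (Rlt_or_le (x u) (x v)); [left|right]; split; nra. }
  exists (fun v => (x v, 0)), (fun u v => arch (x u) (x v) (page u v)).
  split; [|split].
  - intros u v E. apply Hinj. now injection E.
  - intros u v A. unfold arch. pose proof (Hne u v A).
    split; [simpl; reg|]. split; [simpl; reg|].
    split; [f_equal; ring|]. split; [f_equal; ring|]. split; [|split].
    + intros s t _ _ E. injection E as E1 _.
      apply (Rmult_eq_reg_r (x v - x u)); lra.
    + intros t w Ht E. injection E as _ E2.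
      pose proof (arch_height_pos _ _ _ (Hin u v t A Ht)).
      unfold page_sign in E2; destruct (page u v); lra.
    + intros t. rewrite (Hsym u v A). f_equal; [ring|f_equal; ring].
  - intros u v w z Huv Hwz Hdiff s t Hs Ht E. unfold arch in E.
    injection E as EX EY.
    pose proof (Hin u v s Huv Hs) as B1. pose proof (Hin w z t Hwz Ht) as B2.
    rewrite EX in B1, EY.
    pose proof (arch_height_pos _ _ _ B1) as P1. pose proof (arch_height_pos _ _ _ B2) as P2.
    assert (Hpg : page u v = page w z) by
      (unfold page_sign in EY; destruct (page u v), (page w z); auto; lra).
    assert (Hh : (x w + t * (x z - x w) - x u) * (x v - (x w + t * (x z - x w)))
               = (x w + t * (x z - x w) - x w) * (x z - (x w + t * (x z - x w)))).
    { rewrite Hpg in EY. unfold page_sign in EY. destruct (page w z); lra. }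
    destruct (arches_meet _ _ _ _ _ B1 B2 Hh (Hnc u v w z Huv Hwz Hpg)) as [[E1 E2]|[E1 E2]];
    apply Hdiff; [left|right]; split; apply Hinj; auto.
Qed.

Definition lexlt (a b : nat * nat) : Prop :=
  (fst a < fst b \/ (fst a = fst b /\ snd a < snd b))%nat.

Definition lex_real (a : nat * nat) : R := INR (fst a) - / (INR (snd a) + 1).

Lemma lex_real_mono (a b : nat * nat) : lexlt a b -> lex_real a < lex_real b.
Proof.
  unfold lexlt, lex_real. destruct a as [s m], b as [s' m']; simpl.
  pose proof (RinvN_pos m). pose proof (RinvN_pos m').
  assert (/ (INR m' + 1) <= 1).
  { rewrite <- Rinv_1. apply Rinv_le_contravar; [lra|]. pose proof (pos_INR m'); lra. }
  intros [Hs|[-> Hm]].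
  - apply le_INR in Hs. rewrite S_INR in Hs. lra.
  - apply lt_INR in Hm. pose proof (pos_INR m).
    assert (/ (INR m' + 1) < / (INR m + 1)) by (apply Rinv_0_lt_contravar; lra). lra.
Qed.

Lemma lex_real_reflect (a b : nat * nat) : lex_real a < lex_real b -> lexlt a b.
Proof.
  intros H. destruct a as [s m], b as [s' m']. unfold lexlt; simpl.
  destruct (lt_eq_lt_dec s s') as [[Hs|<-]|Hs]; [now left| |].
  - destruct (lt_eq_lt_dec m m') as [[Hm|<-]|Hm]; [now right| lra |].
    pose proof (lex_real_mono (s, m') (s, m) (or_intror (conj eq_refl Hm))). lra.
  - pose proof (lex_real_mono (s', m') (s, m) (or_introl Hs)). lra.
Qed.

Lemma lex_real_inj (a b : nat * nat) : lex_real a = lex_real b -> a = b.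
Proof.
  intros E. destruct a as [s m], b as [s' m'].
  destruct (lt_eq_lt_dec s s') as [[Hs|<-]|Hs].
  - pose proof (lex_real_mono (s, m) (s', m') (or_introl Hs)). lra.
  - destruct (lt_eq_lt_dec m m') as [[Hm|<-]|Hm]; [|reflexivity|].
    + pose proof (lex_real_mono (s, m) (s, m') (or_intror (conj eq_refl Hm))). lra.
    + pose proof (lex_real_mono (s, m') (s, m) (or_intror (conj eq_refl Hm))). lra.
  - pose proof (lex_real_mono (s', m') (s, m) (or_introl Hs)). lra.
Qed.

Lemma planar_from_book_template {V W : Type} (adj : V -> V -> Prop) (adjW : W -> W -> Prop)
    (pos : W -> nat * nat) (page : W -> W -> bool) (f : V -> W) :
  (forall u v, adj u v -> u <> v) ->
  (forall u v, pos (f u) = pos (f v) -> u = v) ->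
  (forall u v, adj u v -> adjW (f u) (f v)) ->
  (forall u v, adjW u v -> page u v = page v u) ->
  noncrossing lexlt adjW pos page ->
  planar adj.
Proof.
  intros Hirr Hinj Hhom Hsym Hnc.
  apply (book_planar adj (fun v => lex_real (pos (f v))) (fun u v => page (f u) (f v))); auto.
  - intros u v E. now apply Hinj, lex_real_inj.
  - apply (noncrossing_reflect lexlt Rlt lex_real adj (fun v => pos (f v))).
    + exact lex_real_reflect.
    + exact (noncrossing_pullback lexlt adj adjW f pos page Hhom Hnc).
Qed.

End BookDrawings.

Local Open Scope nat_scope.

Definition copies {L : Type} (adjL : L -> L -> Prop) (u v : nat * L) : Prop :=
  fst u = fst v /\ adjL (snd u) (snd v).

Definition side_by_side {L : Type} (W : nat) (pos : L -> nat * nat) (v : nat * L) : nat * nat :=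
  (fst v * (W + 1) + fst (pos (snd v)), snd (pos (snd v))).

Lemma block_sep (W c c' : nat) : c < c' -> c * (W + 1) + W < c' * (W + 1).
Proof. intros H. nia. Qed.

Lemma no_crossing_separated (a b c d : nat * nat) (B : nat) :
  (fst a <= B /\ fst b <= B /\ B < fst c /\ B < fst d) \/
  (fst c <= B /\ fst d <= B /\ B < fst a /\ B < fst b) ->
  ~ crossing lexlt a b c d.
Proof. unfold crossing, strictly_inside, strictly_outside, lexlt. lia. Qed.

Lemma noncrossing_copies {L : Type} (W : nat) (adjL : L -> L -> Prop)
    (pos : L -> nat * nat) (page : L -> L -> bool) :
  (forall u v, adjL u v -> fst (pos u) <= W /\ fst (pos v) <= W) ->
  noncrossing lexlt adjL pos page ->
  noncrossing lexlt (copies adjL) (side_by_side W pos) (fun u v => page (snd u) (snd v)).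
Proof.
  intros Hw Hnc [c u] [c1 v] [c' w] [c1' z] [Ec Huv] [Ec' Hwz] Hp; simpl in *; subst c1 c1'.
  pose proof (Hw u v Huv). pose proof (Hw w z Hwz).
  unfold side_by_side; simpl.
  destruct (lt_eq_lt_dec c c') as [[Hc|<-]|Hc].
  - pose proof (block_sep W c c' Hc).
    apply (no_crossing_separated _ _ _ _ (c * (W + 1) + W)); simpl; lia.
  - intro Hcr. apply (Hnc u v w z Huv Hwz Hp).
    revert Hcr. apply (crossing_reflect lexlt lexlt (fun q => (c * (W + 1) + fst q, snd q))).
    unfold lexlt; simpl. lia.
  - pose proof (block_sep W c' c Hc).
    apply (no_crossing_separated _ _ _ _ (c' * (W + 1) + W)); simpl; lia.
Qed.

Lemma side_by_side_inj {L : Type} (W : nat) (pos : L -> nat * nat) (valid : L -> Prop) :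
  (forall l, valid l -> fst (pos l) <= W) ->
  (forall l l', valid l -> valid l' -> pos l = pos l' -> l = l') ->
  forall u v, valid (snd u) -> valid (snd v) ->
    side_by_side W pos u = side_by_side W pos v -> u = v.
Proof.
  intros Hw Hinj [c l] [c' l'] Hl Hl' E; simpl in *. unfold side_by_side in E; simpl in E.
  injection E as E1 E2. pose proof (Hw l Hl). pose proof (Hw l' Hl').
  assert (Hc : c = c').
  { destruct (lt_eq_lt_dec c c') as [[Hc|Hc]|Hc]; auto;
    [pose proof (block_sep W c c' Hc)|pose proof (block_sep W c' c Hc)]; lia. }
  subst c'. f_equal. apply Hinj; auto.
  destruct (pos l), (pos l'); simpl in *. f_equal; lia.
Qed.

Definition vertex (n : nat) : Type := (Knnn_V n * bool)%type.
Definition graph (n : nat) : vertex n -> vertex n -> Prop := kron (Knnn_adj n) K2_adj.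

Definition part {n : nat} (v : vertex n) : nat := proj1_sig (fst (fst v)).
Definition index {n : nat} (v : vertex n) : nat := proj1_sig (snd (fst v)).

(* The six groups (part, side) in hexagon order: consecutive groups are
   exactly the pairs in different parts and on different sides. *)
Definition group_of (i : nat) (b : bool) : nat :=
  match i, b with
  | 0, false => 0 | 1, true => 1 | 2, false => 2
  | 0, true => 3 | 1, false => 4 | _, _ => 5
  end.

Definition group {n : nat} (v : vertex n) : nat := group_of (part v) (snd v).

Definition hex_next (g : nat) : nat := if g =? 5 then 0 else S g.

Lemma part_lt {n : nat} (v : vertex n) : part v < 3.
Proof. exact (proj2_sig (fst (fst v))). Qed.

Lemma index_lt {n : nat} (v : vertex n) : index v < n.
Proof. exact (proj2_sig (snd (fst v))). Qed.

Lemma group_lt {n : nat} (v : vertex n) : group v < 6.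
Proof.
  unfold group. pose proof (part_lt v).
  destruct (part v) as [|[|[|]]]; destruct (snd v); simpl; lia.
Qed.

Lemma vertex_eq {n : nat} (u v : vertex n) : group u = group v -> index u = index v -> u = v.
Proof.
  destruct u as [[[i hi] [a ha]] b], v as [[[i' hi'] [a' ha']] b'].
  unfold group, part, index; simpl. intros Eg Ea. subst a'.
  assert (i = i' /\ b = b') as [-> ->]
    by (destruct i as [|[|[|]]]; destruct i' as [|[|[|]]]; destruct b, b'; simpl in *;
        try lia; auto).
  now rewrite (le_unique _ _ hi hi'), (le_unique _ _ ha ha').
Qed.

Lemma graph_consecutive {n : nat} (u v : vertex n) :
  graph n u v <-> group v = hex_next (group u) \/ group u = hex_next (group v).
Proof.
  unfold graph, kron, Knnn_adj, K2_adj, group. fold (part u) (part v).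
  pose proof (part_lt u). pose proof (part_lt v).
  destruct (part u) as [|[|[|]]]; destruct (part v) as [|[|[|]]];
  destruct (snd u), (snd v); simpl; intuition (try lia; try congruence; try discriminate).
Qed.

Lemma graph_irrefl {n : nat} (u v : vertex n) : graph n u v -> u <> v.
Proof. intros [H _] ->. now apply H. Qed.

(* The template T_p, a bipartite plane graph into which every piece of the
   decomposition of K_{4p,4p} minus a perfect matching embeds.  Its vertices:
   - TB X (X < 4p): the B-vertices, in spine columns 1..4p;
   - THub r (r < 4): four hubs, THub r adjacent to the TB X with X in
     hub_range p r (roughly half of them each);
   - TDig G i: a degree-two vertex on the consecutive pair TB G, TB (G + 1);
   - TWrap i: a degree-two vertex on the pair TB 0, TB (4p - 1).
   The parameter i only tells parallel degree-two vertices apart. *)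
Inductive tvert : Type :=
  | TB (X : nat)
  | THub (r : nat)
  | TDig (G i : nat)
  | TWrap (i : nat).

Definition hub_range (p r X : nat) : Prop :=
  match r with
  | 0 => X <= 2*p - 1 \/ X = 4*p - 1
  | 1 => X <= 2*p
  | 2 => 2*p - 1 <= X
  | _ => X = 0 \/ 2*p <= X
  end.

Definition tadj (p : nat) (h h' : tvert) : Prop :=
  match h, h' with
  | THub r, TB X => r < 4 /\ X < 4*p /\ hub_range p r X
  | TDig G i, TB X => G + 1 < 4*p /\ i < 4*p /\ (X = G \/ X = G + 1)
  | TWrap i, TB X => i < 4*p /\ (X = 0 \/ X = 4*p - 1)
  | _, _ => False
  end.

Definition tpos (p : nat) (h : tvert) : nat * nat :=
  match h with
  | TB X => (X + 1, 0)
  | THub 0 => (0, 4*p)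
  | THub 1 => (2*p, 4*p + 2)
  | THub 2 => (2*p + 1, 1)
  | THub _ => (4*p, 1)
  | TDig G i => (G + 1, 2 + i)
  | TWrap i => (0, 4*p - 1 - i)
  end.

Definition tpage (h h' : tvert) : bool :=
  match h, h' with
  | THub r, TB _ => (r =? 1) || (r =? 3)
  | TDig G _, TB X => X =? G
  | TWrap _, TB X => X =? 0
  | _, _ => false
  end.

Lemma template_noncrossing (p : nat) : noncrossing lexlt (tadj p) (tpos p) tpage.
Proof.
  intros h1 h2 h3 h4 A1 A2 Hg.
  destruct h1 as [X1|r1|G1 i1|i1]; destruct h2 as [X2|r2|G2 i2|i2]; simpl in A1; try contradiction;
  destruct h3 as [X3|r3|G3 i3|i3]; destruct h4 as [X4|r4|G4 i4|i4]; simpl in A2; try contradiction;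
  simpl in Hg;
  repeat match goal with
  | H : ?r < 4 /\ _ |- _ => destruct H as (? & ? & ?); destruct r as [|[|[|[|]]]]; try lia
  | H : _ /\ _ |- _ => destruct H
  | H : context [?a =? ?b] |- _ => destruct (Nat.eqb_spec a b)
  end; simpl in *; try discriminate;
  unfold crossing, strictly_inside, strictly_outside, lexlt; simpl; lia.
Qed.

Definition tvalid (p : nat) (h : tvert) : Prop :=
  match h with
  | TB X => X < 4*p
  | THub r => r < 4
  | TDig G i => G + 1 < 4*p /\ i < 4*p
  | TWrap i => i < 4*p
  end.

Lemma tadj_valid (p : nat) (h h' : tvert) : 1 <= p -> tadj p h h' -> tvalid p h /\ tvalid p h'.
Proof. destruct h, h'; simpl; intuition lia. Qed.

Lemma tpos_width (p : nat) (h : tvert) : 1 <= p -> tvalid p h -> fst (tpos p h) <= 4*p.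
Proof. intros Hp. destruct h as [X|[|[|[|r]]]|G i|i]; simpl; lia. Qed.

Lemma tpos_inj (p : nat) (h h' : tvert) :
  tvalid p h -> tvalid p h' -> tpos p h = tpos p h' -> h = h'.
Proof.
  intros V V' E.
  destruct h as [X|[|[|[|r]]]|G i|i]; destruct h' as [X'|[|[|[|r']]]|G' i'|i'];
  pose proof (f_equal fst E) as E1; pose proof (f_equal snd E) as E2;
  simpl in V, V', E1, E2; first [reflexivity | f_equal; lia | lia].
Qed.

Definition tpage_sym (h h' : tvert) : bool :=
  match h with TB _ => tpage h' h | _ => tpage h h' end.

Lemma tpage_sym_spec (p : nat) (h h' : tvert) :
  tadj p h h' -> tpage_sym h h' = tpage h h' /\ tpage_sym h' h = tpage h h'.
Proof. destruct h, h'; simpl; tauto. Qed.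

(* The template graph of a colour class: undirected side-by-side copies of
   T_p, one for each of the three pieces of K_{4p,4p} in the class. *)
Definition template (p : nat) (u v : nat * tvert) : Prop :=
  copies (tadj p) u v \/ copies (tadj p) v u.

Definition template_pos (p : nat) : nat * tvert -> nat * nat := side_by_side (4*p) (tpos p).

Definition template_page (u v : nat * tvert) : bool := tpage_sym (snd u) (snd v).

Lemma template_book (p : nat) : 1 <= p ->
  (forall u v, template p u v -> template_page u v = template_page v u) /\
  noncrossing lexlt (template p) (template_pos p) template_page.
Proof.
  intros Hp.
  assert (Hpg : forall u v, copies (tadj p) u v ->
            template_page u v = tpage (snd u) (snd v) /\
            template_page v u = tpage (snd u) (snd v)).
  { intros u v [_ A]. exact (tpage_sym_spec p _ _ A). }
  split.
  - exact (symmetrized_page_sym _ _ _ Hpg).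
  - apply (noncrossing_symmetrize _ _ _ _ _ Hpg).
    apply noncrossing_copies; [|exact (template_noncrossing p)].
    intros u v A. destruct (tadj_valid p u v Hp A). split; apply tpos_width; auto.
Qed.

Lemma template_pos_inj (p : nat) (u v : nat * tvert) : 1 <= p ->
  tvalid p (snd u) -> tvalid p (snd v) -> template_pos p u = template_pos p v -> u = v.
Proof.
  intros Hp. apply (side_by_side_inj _ _ (tvalid p)).
  - intros l. now apply tpos_width.
  - apply tpos_inj.
Qed.

(* The decomposition of K_{4p,4p} minus the perfect matching {aa}.  For the
   edge from A-vertex a = 4x + r to B-vertex j <> a, let d be the offset
   j - a mod 4p.  If d lies in the half-range fixed by r (a hub edge), the edge
   goes to class x, where a plays the hub THub r.  Otherwise its shift s is
   about d / 2 (between 1 and p - 1), the edge goes to class x - s mod p, and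
   a has degree two there, its two edges covering consecutive offsets.  In
   class k the B-vertex j is relabelled X = j - 4k - 2 mod 4p. *)
Definition offset (p a j : nat) : nat := (j + 4*p - a) mod (4*p).

Definition hub_edge (p a j : nat) : bool :=
  let d := offset p a j in
  if a mod 4 <? 2 then (1 <=? d) && (d <=? 2*p + 1) else (2*p - 1 <=? d) && (d <=? 4*p - 1).

Definition shift (p a j : nat) : nat :=
  let d := offset p a j in
  if hub_edge p a j then 0 else if a mod 4 <? 2 then (d - 2*p) / 2 else (d + 1) / 2.

Definition kclass (p a j : nat) : nat := (a / 4 + p - shift p a j) mod p.

(* In class k, the degree-two A-vertex 4x + r with shift s = x - k covers the
   B-vertices base r + 6 s and the next one. *)
Definition base (p r : nat) : nat :=
  match r with 0 => 2*p - 2 | 1 => 2*p - 1 | 2 => 4*p - 1 | _ => 0 end.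

Definition roleA (p k a : nat) : tvert :=
  let x := a / 4 in let r := a mod 4 in
  if x =? k then THub r else
  let s := (x + p - k) mod p in
  let G := (base p r + 6 * s) mod (4*p) in
  if G =? 4*p - 1 then TWrap (r*p + s) else TDig G (r*p + s).

Definition roleB (p k j : nat) : tvert := TB ((j + 8*p - (4*k + 2)) mod (4*p)).

(* Replace t mod m and t / m by fresh variables r, q with t = m * q + r,
   r < m and q < K, so that lia can reason about them. *)
Ltac split_mod t m K :=
  let q := fresh "q" in let r := fresh "r" in let Eq := fresh "Eq" in let Er := fresh "Er" in
  let He := fresh "He" in let Hr := fresh "Hr" in let Hq := fresh "Hq" in
  pose proof (Nat.div_mod_eq t m) as He;
  assert (Hr : t mod m < m) by (apply Nat.mod_upper_bound; lia);
  assert (Hq : t / m < K) by (apply Nat.Div0.div_lt_upper_bound; lia);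
  remember (t / m) as q eqn:Eq; remember (t mod m) as r eqn:Er; clear Eq Er.

Lemma cong_small (n A B X Y : nat) : X < n -> Y <= n -> X + n*A = Y + n*B -> X = Y \/ (Y = n /\ X = 0).
Proof. intros HX HY E. destruct (lt_eq_lt_dec A B) as [[H|H]|H]; nia. Qed.

Lemma hub_edge_in_template (p a j : nat) : 1 <= p -> a < 4*p -> j < 4*p ->
  hub_edge p a j = true ->
  tadj p (roleA p (kclass p a j) a) (roleB p (kclass p a j) j).
Proof.
  intros Hp Ha Hj. unfold roleA, roleB, kclass, shift, hub_edge, offset.
  split_mod a 4 p. rename q into x, r into rr.
  split_mod (j + 4*p - a) (4*p) 2. rename q into w, r into d.
  intros Hhub. rewrite Hhub, Nat.sub_0_r.
  replace ((x + p) mod p) with x by (split_mod (x + p) p 2; destruct q as [|[|]]; lia).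
  rewrite Nat.eqb_refl.
  split_mod (j + 8*p - (4*x+2)) (4*p) 3.
  simpl. repeat split; try lia.
  destruct (Nat.ltb_spec rr 2); apply andb_prop in Hhub as [H1 H2];
  apply Nat.leb_le in H1; apply Nat.leb_le in H2;
  destruct rr as [|[|[|[|]]]]; try lia; simpl;
  destruct w as [|[|]]; destruct q as [|[|[|]]]; lia.
Qed.

Lemma shift_off_hub (p a j : nat) : 1 <= p -> a < 4*p -> j < 4*p -> a <> j ->
  hub_edge p a j = false ->
  exists e, 1 <= shift p a j < p /\ e < 2 /\
    (a mod 4 < 2 -> offset p a j = 2*p + 2 * shift p a j + e) /\
    (2 <= a mod 4 -> offset p a j + 1 = 2 * shift p a j + e).
Proof.
  intros Hp Ha Hj Haj. unfold shift, hub_edge. set (d := offset p a j).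
  assert (Hd : 1 <= d < 4*p).
  { unfold d, offset. split_mod (j + 4*p - a) (4*p) 2. destruct q as [|[|]]; lia. }
  intros Hoff. rewrite Hoff.
  assert (a mod 4 < 4) by (apply Nat.mod_upper_bound; lia).
  destruct (Nat.ltb_spec (a mod 4) 2);
  apply Bool.andb_false_iff in Hoff as [Hb|Hb]; apply Nat.leb_gt in Hb; try lia.
  - split_mod (d - 2*p) 2 p. exists r. lia.
  - split_mod (d + 1) 2 p. exists r. lia.
Qed.

(* The other edges land on edges of degree-two template vertices: the
   relabelled B-vertex X is G + e with G = base r + 6 s mod 4p (or wraps to 0). *)
Lemma digon_edge_in_template (p a j : nat) : 1 <= p -> a < 4*p -> j < 4*p -> a <> j ->
  hub_edge p a j = false ->
  tadj p (roleA p (kclass p a j) a) (roleB p (kclass p a j) j).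
Proof.
  intros Hp Ha Hj Haj Hoff.
  destruct (shift_off_hub p a j Hp Ha Hj Haj Hoff) as (e & Hs & He & Hlo & Hhi).
  unfold roleA, roleB, kclass. unfold offset in Hlo, Hhi.
  revert Hs Hlo Hhi. generalize (shift p a j) as s. intros s Hs Hlo Hhi.
  split_mod a 4 p. rename q into x, r into rr.
  split_mod (j + 4*p - a) (4*p) 2. rename q into w, r into d.
  split_mod (x + p - s) p 2. rename q into w2, r into k.
  destruct (Nat.eqb_spec x k) as [Hxk|Hxk]; [destruct w2 as [|[|]]; lia|].
  replace ((x + p - k) mod p) with s
    by (split_mod (x + p - k) p 2; destruct w2 as [|[|]]; destruct q as [|[|]]; lia).
  assert (Hb : base p rr <= 4*p - 1) by (destruct rr as [|[|[|[|]]]]; simpl; lia).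
  split_mod (base p rr + 6 * s) (4*p) 3. rename q into w4, r into G.
  split_mod (j + 8*p - (4*k + 2)) (4*p) 3. rename q into q5, r into X.
  assert (Key : X = G + e \/ (G + e = 4*p /\ X = 0)).
  { destruct rr as [|[|[|[|]]]]; try lia; simpl in *.
    - apply (cong_small (4*p) q5 (w4 + w + w2)); lia.
    - apply (cong_small (4*p) q5 (w4 + w + w2)); lia.
    - apply (cong_small (4*p) (q5 + 1) (w4 + w + w2)); lia.
    - apply (cong_small (4*p) q5 (w4 + w + w2)); lia. }
  assert (Hi : rr * p + s < 4*p) by (destruct rr as [|[|[|[|]]]]; lia).
  destruct (Nat.eqb_spec G (4*p - 1)); cbn [tadj]; repeat split; lia.
Qed.

Lemma kclass_edge_in_template (p a j : nat) : 1 <= p -> a < 4*p -> j < 4*p -> a <> j ->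
  tadj p (roleA p (kclass p a j) a) (roleB p (kclass p a j) j).
Proof.
  intros Hp Ha Hj Haj. destruct (hub_edge p a j) eqn:Hhub.
  - now apply hub_edge_in_template.
  - now apply digon_edge_in_template.
Qed.

Lemma roleA_valid (p k a : nat) : 1 <= p -> a < 4*p -> tvalid p (roleA p k a).
Proof.
  intros Hp Ha. unfold roleA.
  assert (a mod 4 < 4) by (apply Nat.mod_upper_bound; lia).
  assert (Hs : (a / 4 + p - k) mod p < p) by (apply Nat.mod_upper_bound; lia).
  assert ((base p (a mod 4) + 6 * ((a / 4 + p - k) mod p)) mod (4*p) < 4*p)
    by (apply Nat.mod_upper_bound; lia).
  assert (a mod 4 * p + (a / 4 + p - k) mod p < 4*p)
    by (destruct (a mod 4) as [|[|[|[|]]]]; lia).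
  destruct (a / 4 =? k); [cbn [tvalid]; lia|].
  destruct (Nat.eqb_spec ((base p (a mod 4) + 6 * ((a / 4 + p - k) mod p)) mod (4*p)) (4*p - 1));
  cbn [tvalid]; lia.
Qed.

Lemma roleB_valid (p k j : nat) : 1 <= p -> tvalid p (roleB p k j).
Proof. intros Hp. cbn [roleB tvalid]. apply Nat.mod_upper_bound. lia. Qed.

Lemma roleA_not_B (p k a X : nat) : roleA p k a <> TB X.
Proof. unfold roleA. destruct (_ =? _); [discriminate|]. destruct (_ =? _); discriminate. Qed.

Definition tlabel (h : tvert) : nat :=
  match h with TB X => X | THub r => r | TDig _ i => i | TWrap i => i end.

Lemma roleA_inj (p k a a' : nat) : 1 <= p -> k < p -> a < 4*p -> a' < 4*p ->
  roleA p k a = roleA p k a' -> a = a'.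
Proof.
  intros Hp Hk Ha Ha' E. unfold roleA in E.
  split_mod a 4 p. split_mod a' 4 p.
  assert (Hs : (q + p - k) mod p < p) by (apply Nat.mod_upper_bound; lia).
  assert (Hs' : (q0 + p - k) mod p < p) by (apply Nat.mod_upper_bound; lia).
  assert (Hsame : (q + p - k) mod p = (q0 + p - k) mod p -> q = q0).
  { split_mod (q + p - k) p 2. split_mod (q0 + p - k) p 2.
    destruct q1 as [|[|]]; destruct q2 as [|[|]]; lia. }
  destruct (Nat.eqb_spec q k); destruct (Nat.eqb_spec q0 k);
  repeat match type of E with context [if ?b then _ else _] => destruct b end;
  try discriminate; apply (f_equal tlabel) in E; simpl in E; [lia|..];
  rewrite !(Nat.mul_comm _ p) in E;
  destruct (Nat.div_mod_unique p r r0 _ _ Hs Hs' E) as [Er Es];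
  pose proof (Hsame Es); lia.
Qed.

Lemma roleB_inj (p k j j' : nat) : 1 <= p -> k < p -> j < 4*p -> j' < 4*p ->
  roleB p k j = roleB p k j' -> j = j'.
Proof.
  intros Hp Hk Hj Hj' E. apply (f_equal tlabel) in E. cbn [roleB tlabel] in E. revert E.
  split_mod (j + 8*p - (4*k + 2)) (4*p) 3. split_mod (j' + 8*p - (4*k + 2)) (4*p) 3.
  destruct q as [|[|[|]]]; destruct q0 as [|[|[|]]]; lia.
Qed.

Definition label (p : nat) (u v : vertex (4*p)) : nat :=
  if index u =? index v then 2*p
  else (group u mod 2) * p + kclass p (index u) (index v).

Definition colour (p : nat) (u v : vertex (4*p)) : nat :=
  if group v =? hex_next (group u) then label p u v else label p v u.

(* The hexagon has no 2-cycles, so each edge has one forward orientation. *)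
Lemma hex_next_twice (g : nat) : g < 6 -> hex_next (hex_next g) <> g.
Proof. intros. unfold hex_next. destruct g as [|[|[|[|[|[|]]]]]]; simpl; lia. Qed.

Lemma colour_forward (p : nat) (u v : vertex (4*p)) :
  group v = hex_next (group u) -> colour p u v = label p u v.
Proof. intros E. unfold colour. now rewrite E, Nat.eqb_refl. Qed.

Lemma colour_sym (p : nat) (u v : vertex (4*p)) : graph _ u v -> colour p u v = colour p v u.
Proof.
  intros A. apply graph_consecutive in A as [A|A]; unfold colour; rewrite A, Nat.eqb_refl.
  - destruct (Nat.eqb_spec (group u) (hex_next (hex_next (group u)))) as [E|E]; auto.
    exfalso. exact (hex_next_twice _ (group_lt u) (eq_sym E)).
  - destruct (Nat.eqb_spec (group v) (hex_next (hex_next (group v)))) as [E|E]; auto.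
    exfalso. exact (hex_next_twice _ (group_lt v) (eq_sym E)).
Qed.

Lemma label_cases (p : nat) (u v : vertex (4*p)) : 1 <= p ->
  (index u = index v /\ label p u v = 2*p) \/ (index u <> index v /\ label p u v < 2*p).
Proof.
  intros Hp. unfold label. destruct (Nat.eqb_spec (index u) (index v)); [now left|right].
  split; [assumption|].
  assert (kclass p (index u) (index v) < p) by (apply Nat.mod_upper_bound; lia).
  assert (group u mod 2 < 2) by (apply Nat.mod_upper_bound; lia).
  destruct (group u mod 2) as [|[|]]; lia.
Qed.

Lemma label_lt (p : nat) (u v : vertex (4*p)) : 1 <= p -> label p u v < 2*p + 1.
Proof. intros Hp. destruct (label_cases p u v Hp); lia. Qed.

Lemma label_leftover (p : nat) (u v : vertex (4*p)) : 1 <= p ->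
  label p u v = 2*p -> index u = index v.
Proof. intros Hp. destruct (label_cases p u v Hp); lia. Qed.

Lemma colour_lt (p : nat) (u v : vertex (4*p)) : 1 <= p -> colour p u v < 2*p + 1.
Proof. intros. unfold colour. destruct (_ =? _); now apply label_lt. Qed.

Definition hex_adj (g h : nat) : Prop := g < 6 /\ h = hex_next g.
Definition hex_pos (g : nat) : nat * nat := (g, 0).

Lemma hexagon_noncrossing : noncrossing lexlt hex_adj hex_pos (fun _ _ => true).
Proof.
  intros g h g' h' [Hg ->] [Hg' ->] _. unfold hex_next.
  destruct g as [|[|[|[|[|[|]]]]]]; destruct g' as [|[|[|[|[|[|]]]]]]; try lia;
  unfold crossing, strictly_inside, strictly_outside, lexlt; simpl; lia.
Qed.

Lemma leftover_planar (p : nat) : 1 <= p ->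
  planar (fun u v : vertex (4*p) => graph _ u v /\ colour p u v = 2*p).
Proof.
  intros Hp.
  apply (planar_from_book_template _ (fun a b => copies hex_adj a b \/ copies hex_adj b a)
           (side_by_side 5 hex_pos) (fun _ _ => true) (fun v => (index v, group v))).
  - intros u v [A _]. now apply graph_irrefl.
  - intros u v E.
    apply (side_by_side_inj 5 hex_pos (fun g => g < 6)) in E; simpl; try apply group_lt.
    + injection E as Ei Eg. now apply vertex_eq.
    + intros g Hg. simpl. lia.
    + intros g g' _ _ Eg. now injection Eg.
  - intros u v [A C]. unfold copies; simpl.
    apply graph_consecutive in A as A'.
    destruct A' as [G|G]; [left|right]; split.
    + apply (label_leftover p); auto. now rewrite <- (colour_forward p u v G).
    + split; [apply group_lt | exact G].
    + apply (label_leftover p); auto. rewrite <- (colour_forward p v u G).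
      now rewrite <- colour_sym.
    + split; [apply group_lt | exact G].
  - reflexivity.
  - apply (noncrossing_symmetrize _ _ _ (fun _ _ => true)); [tauto|].
    apply (noncrossing_copies 5 hex_adj hex_pos (fun _ _ => true)); [|exact hexagon_noncrossing].
    intros g h [Hg ->]. unfold hex_next. destruct (Nat.eqb_spec g 5); simpl; lia.
Qed.

(* In the class m*p + k the edges run from the groups of parity m (tails, in
   the role of A-vertices) to the next group (heads, B-vertices); the three
   resulting pieces of K_{4p,4p} go to three copies of the template. *)
Definition role (p m k : nat) (v : vertex (4*p)) : nat * tvert :=
  if group v mod 2 =? m then (group v / 2, roleA p k (index v))
  else ((group v + 5) mod 6 / 2, roleB p k (index v)).

Lemma role_valid (p m k : nat) (v : vertex (4*p)) : 1 <= p -> tvalid p (snd (role p m k v)).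
Proof.
  intros Hp. unfold role. destruct (_ =? _); simpl.
  - apply roleA_valid; [auto | apply index_lt].
  - now apply roleB_valid.
Qed.

Lemma role_inj (p m k : nat) (u v : vertex (4*p)) : 1 <= p -> m < 2 -> k < p ->
  role p m k u = role p m k v -> u = v.
Proof.
  intros Hp Hm Hk E. unfold role in E.
  pose proof (group_lt u) as Gu. pose proof (group_lt v) as Gv.
  pose proof (index_lt u) as Iu. pose proof (index_lt v) as Iv.
  destruct (Nat.eqb_spec (group u mod 2) m) as [Pu|Pu];
  destruct (Nat.eqb_spec (group v mod 2) m) as [Pv|Pv];
  pose proof (f_equal fst E) as Ec; pose proof (f_equal snd E) as Er; cbn [fst snd] in Ec, Er.
  - apply vertex_eq; [|exact (roleA_inj p k _ _ Hp Hk Iu Iv Er)].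
    pose proof (Nat.div_mod_eq (group u) 2). pose proof (Nat.div_mod_eq (group v) 2). lia.
  - now apply roleA_not_B in Er.
  - now apply eq_sym, roleA_not_B in Er.
  - apply vertex_eq; [|exact (roleB_inj p k _ _ Hp Hk Iu Iv Er)].
    revert Ec Pu Pv. clear - Hm Gu Gv.
    destruct (group u) as [|[|[|[|[|[|]]]]]]; destruct (group v) as [|[|[|[|[|[|]]]]]];
    simpl; lia.
Qed.

Lemma forward_edge_in_template (p m k : nat) (u v : vertex (4*p)) : 1 <= p -> m < 2 -> k < p ->
  group v = hex_next (group u) -> label p u v = m*p + k ->
  copies (tadj p) (role p m k u) (role p m k v).
Proof.
  intros Hp Hm Hk Hf L. unfold label in L.
  destruct (Nat.eqb_spec (index u) (index v)) as [Ei|Ni]; [destruct m as [|[|]]; lia|].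
  assert (Hkc : kclass p (index u) (index v) < p) by (apply Nat.mod_upper_bound; lia).
  assert (Hpar : group u mod 2 < 2) by (apply Nat.mod_upper_bound; lia).
  rewrite (Nat.mul_comm (group u mod 2) p), (Nat.mul_comm m p) in L.
  destruct (Nat.div_mod_unique p _ _ _ _ Hkc Hk L) as [Em Ek].
  pose proof (group_lt u) as Gu.
  assert (Hhead : group v mod 2 <> m /\ (group v + 5) mod 6 / 2 = group u / 2).
  { rewrite <- Em, Hf. clear - Gu. unfold hex_next.
    destruct (group u) as [|[|[|[|[|[|]]]]]]; simpl; lia. }
  unfold role. rewrite Em, Nat.eqb_refl.
  destruct (Nat.eqb_spec (group v mod 2) m) as [E|_]; [tauto|].
  split; cbn [fst snd]; [symmetry; apply Hhead|]. rewrite <- Ek.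
  apply kclass_edge_in_template; auto using index_lt.
Qed.

Lemma class_edge_in_template (p m k : nat) (u v : vertex (4*p)) : 1 <= p -> m < 2 -> k < p ->
  graph _ u v -> colour p u v = m*p + k -> template p (role p m k u) (role p m k v).
Proof.
  intros Hp Hm Hk A C. destruct (proj1 (graph_consecutive u v) A) as [G|G].
  - left. apply forward_edge_in_template; auto. now rewrite <- colour_forward.
  - right. apply forward_edge_in_template; auto.
    rewrite <- colour_forward, <- colour_sym; auto.
Qed.

Lemma class_planar (p m k : nat) : 1 <= p -> m < 2 -> k < p ->
  planar (fun u v : vertex (4*p) => graph _ u v /\ colour p u v = m*p + k).
Proof.
  intros Hp Hm Hk. destruct (template_book p Hp) as [Hsym Hnc].
  apply (planar_from_book_template _ (template p) (template_pos p) template_page (role p m k));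
    auto.
  - intros u v [A _]. now apply graph_irrefl.
  - intros u v E. apply (role_inj p m k); auto.
    apply (template_pos_inj p); auto using role_valid.
  - intros u v [A C]. now apply class_edge_in_template.
Qed.

Lemma colour_class_planar (p i : nat) : 1 <= p -> i < 2*p + 1 ->
  planar (fun u v : vertex (4*p) => graph _ u v /\ colour p u v = i).
Proof.
  intros Hp Hi. destruct (Nat.eq_dec i (2*p)) as [->|Ne].
  - now apply leftover_planar.
  - rewrite (Nat.div_mod_eq i p), (Nat.mul_comm p (i / p)).
    apply class_planar; auto.
    + apply Nat.Div0.div_lt_upper_bound; lia.
    + apply Nat.mod_upper_bound; lia.
Qed.

Lemma thickness_of_partition {V : Type} (adj : V -> V -> Prop) (k : nat) :
  planar_edge_partition adj k -> thickness_le adj k.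
Proof.
  intros (c & Hc & Hpl).
  exists (fun i u v => adj u v /\ c u v = i). split; [|split].
  - now intros i _ u v [A _].
  - exact Hpl.
  - intros u v A. exists (c u v). split; [apply (Hc u v A)|auto].
Qed.

Theorem lemma4p2 (p : nat) (hp : (1 <= p)%nat) :
  planar_edge_partition (kron (Knnn_adj (4 * p)) K2_adj) (2 * p + 1) /\
  thickness_le (kron (Knnn_adj (4 * p)) K2_adj) (2 * p + 1).
Proof.
  assert (Hpart : planar_edge_partition (graph (4*p)) (2*p + 1)).
  { exists (colour p). split.
    - intros u v A. split; [now apply colour_sym | now apply colour_lt].
    - intros i Hi. now apply colour_class_planar. }
  split; [exact Hpart | exact (thickness_of_partition _ _ Hpart)].
Qed.
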